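(* Let $q$ be a prime power, $k\ge1$, $n=4k$, and $\delta\in\mathbb{F}_{q^n}$. Let $$g(x)=\sum_{i=1}^{k}x^{q^{2(i-1)}+q^{2(i-1)+2k}}.$$ Then for $a\in\mathbb{F}_q$, $a\neq0$, the polynomial $f(x)=g(x^q-x+\delta)+ax$ permutes $\mathbb{F}_{q^n}$ if and only if $\mathrm{Tr}(\delta)\neq a$.
   Context: $\mathrm{Tr}$ denotes the trace function from $\mathbb{F}_{q^n}$ to $\mathbb{F}_q$, $\mathrm{Tr}(x)=x+x^q+\cdots+x^{q^{n-1}}$. A polynomial permutes $\mathbb{F}_{q^n}$ if it induces a bijection of $\mathbb{F}_{q^n}$. *)

From mathcomp Require Import all_boot all_algebra all_field.
Set Implicit Arguments. Unset Strict Implicit. Unset Printing Implicit Defensive.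
Import GRing.Theory.
Local Open Scope ring_scope.

Definition trq (F : finFieldType) (q n : nat) (x : F) : F :=
  \sum_(i < n) x ^+ (q ^ i).

(* g(x) = sum_{i=1}^{k} x^{q^{2(i-1)} + q^{2(i-1)+2k}}, reindexed with j = i-1. *)
Definition gpoly (F : finFieldType) (q k : nat) (x : F) : F :=
  \sum_(j < k) x ^+ (q ^ (2 * j) + q ^ (2 * j + 2 * k)).

(* Write y = x^q - x + delta and Tr2 for the trace of F_{q^4k} over F_{q^2}.
   For u in F_{q^2} and w = u^q - u we have w^q = -w, and since g(z) is a sum of
   products z^{q^2j} z^{q^2j+2k}, g(y + w) = g(y) + w Tr2(y) + k w^2.  Hence
   f(x + u) = f(x) + D with D = w Tr2(y) + k w^2 + a u, and from
   Tr2(y) + Tr2(y)^q = Tr(y) = Tr(delta) one gets D - D^q = w (Tr(delta) - a).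
   If Tr(delta) <> a, a collision f(x) = f(x + u) forces u in F_{q^2} (g takes
   values in F_{q^2}) and D = 0, so w = 0 and then u = 0.
   If Tr(delta) = a, take u = Tr2(x0) with w <> 0 and r = -(k w^2 + a u)/w, so
   that r + r^q = a.  Counting roots of q-polynomials shows that x |-> Tr2(x)^q - Tr2(x)
   maps onto {s | s + s^q = 0}, so some x has Tr2(y) = r, i.e. D = 0. *)

From mathcomp Require Import all_boot all_algebra all_field.
From mathcomp Require Import ring.
Set Implicit Arguments. Unset Strict Implicit.
Import GRing.Theory.
Local Open Scope ring_scope.

Lemma sum_shift_periodic (V : nmodType) (G : nat -> V) n :
  G n = G 0%N -> \sum_(i < n) G i.+1 = \sum_(i < n) G i.
Proof.
case: n => [|n] Gn; first by rewrite !big_ord0.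
by rewrite big_ord_recr big_ord_recl /= Gn addrC.
Qed.

Lemma sum_ord_pairs (V : nmodType) (G : nat -> V) n :
  \sum_(i < 2 * n) G i = \sum_(j < n) (G (2 * j)%N + G (2 * j).+1).
Proof.
rewrite -(big_mkord xpredT G) -(big_mkord xpredT (fun j => G (2 * j)%N + G (2 * j).+1)).
elim: n => [|n IHn]; first by rewrite muln0 !big_geq.
by rewrite mulnS !add2n !big_nat_recr //= IHn addrA.
Qed.

Section AdditivePower.
Variables (R : comNzRingType) (Q : nat).
Hypotheses (Q_gt0 : (0 < Q)%N) (exprQD : forall x y : R, (x + y) ^+ Q = x ^+ Q + y ^+ Q).

Lemma exprQnD i (x y : R) : (x + y) ^+ (Q ^ i) = x ^+ (Q ^ i) + y ^+ (Q ^ i).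
Proof. by elim: i => [|i IHi]; rewrite ?expn0 ?expr1 // expnSr !exprM IHi exprQD. Qed.

Lemma exprQn0 i : (0 : R) ^+ (Q ^ i) = 0.
Proof. by rewrite expr0n expn_eq0 eqn0Ngt Q_gt0. Qed.

Lemma exprQn_sum i I (r : seq I) (P : pred I) (G : I -> R) :
  (\sum_(j <- r | P j) G j) ^+ (Q ^ i) = \sum_(j <- r | P j) G j ^+ (Q ^ i).
Proof. exact: (big_morph _ (exprQnD i) (exprQn0 i)). Qed.

Lemma exprQnN i (x : R) : (- x) ^+ (Q ^ i) = - x ^+ (Q ^ i).
Proof. by apply/eqP; rewrite -addr_eq0 -exprQnD addNr exprQn0. Qed.

Lemma exprQnB i (x y : R) : (x - y) ^+ (Q ^ i) = x ^+ (Q ^ i) - y ^+ (Q ^ i).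
Proof. by rewrite exprQnD exprQnN. Qed.

Lemma exprQN (x : R) : (- x) ^+ Q = - x ^+ Q.
Proof. by have := exprQnN 1 x; rewrite expn1. Qed.

Lemma exprQMn (x : R) n : (x *+ n) ^+ Q = x ^+ Q *+ n.
Proof. by elim: n => [|n IHn]; rewrite ?mulr0n ?expr0n ?gtn_eqF // !mulrS exprQD IHn. Qed.

End AdditivePower.

Section Trace.
Variables (F : finFieldType) (Q : nat).
Hypotheses (Q_gt0 : (0 < Q)%N) (exprQD : forall x y : F, (x + y) ^+ Q = x ^+ Q + y ^+ Q).

Lemma trqD n (x y : F) : trq Q n (x + y) = trq Q n x + trq Q n y.
Proof. by rewrite /trq -big_split; apply: eq_bigr => i _; rewrite exprQnD. Qed.

Lemma trqB n (x y : F) : trq Q n (x - y) = trq Q n x - trq Q n y.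
Proof. by rewrite /trq -sumrB; apply: eq_bigr => i _; rewrite exprQnB. Qed.

Lemma exprQ_trq P n (x : F) : trq P n x ^+ Q = trq P n (x ^+ Q).
Proof.
rewrite -[in LHS](expn1 Q) exprQn_sum // expn1.
by apply: eq_bigr => i _; rewrite exprAC.
Qed.

Lemma trq_tower n (x : F) :
  trq Q (2 * n) x = trq (Q ^ 2) n x + trq (Q ^ 2) n x ^+ Q.
Proof.
rewrite exprQ_trq /trq (sum_ord_pairs (fun i => x ^+ (Q ^ i))) -big_split.
apply: eq_bigr => j _ /=.
by rewrite -!exprM -!expnM expnS.
Qed.

Section Periodic.
Variable n : nat.
Hypothesis exprQn_id : forall x : F, x ^+ (Q ^ n) = x.

Lemma trq_exprQ (x : F) : trq Q n (x ^+ Q) = trq Q n x.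
Proof.
rewrite /trq; under eq_bigr => i _ do rewrite -exprM -expnS.
by rewrite (@sum_shift_periodic _ (fun i => x ^+ (Q ^ i))) // exprQn_id expn0 expr1.
Qed.

Lemma trq_exprQ_id (x : F) : trq Q n x ^+ Q = trq Q n x.
Proof. by rewrite exprQ_trq trq_exprQ. Qed.

Lemma trq_exprQB (x : F) : trq Q n (x ^+ Q - x) = 0.
Proof. by rewrite trqB trq_exprQ subrr. Qed.

End Periodic.
End Trace.

Lemma card_le_image_mul_kernel (V W : finZmodType) (f : V -> W) :
  (forall x y, f (x - y) = f x - f y) ->
  (#|V| <= #|f @: V| * #|[set x | f x == 0%R]|)%N.
Proof.
move=> fB; pose s y := odflt 0 [pick x | f x == y].
have fs x : f (s (f x)) = f x.
  by rewrite /s; case: pickP => [z /eqP //|/(_ x)]; rewrite eqxx.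
have split_inj : injective (fun x => (f x, x - s (f x))).
  by move=> x x' [fxx']; rewrite fxx' => /subIr.
rewrite -cardsT -(card_imset _ split_inj) -cardsX; apply: subset_leq_card.
apply/subsetP => _ /imsetP[x _ ->]; rewrite in_setX imset_f //=.
by rewrite inE fB fs subrr.
Qed.

Lemma card_roots_lt_size (F : finIdomainType) (p : {poly F}) :
  p != 0 -> (#|[set x | root p x]| < size p)%N.
Proof.
move=> p_neq0; rewrite cardE max_poly_roots ?enum_uniq //.
by apply/allP => x; rewrite mem_enum inE.
Qed.

Lemma size_linearized (R : idomainType) (Q m : nat) (c : nat -> R) :
  (1 < Q)%N -> c m != 0 ->
  size (\sum_(i < m.+1) c i *: 'X^(Q ^ i)) = (Q ^ m).+1.
Proof.
move=> Q_gt1 cm_neq0; rewrite big_ord_recr /= addrC size_polyDl size_scale ?size_polyXn //.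
rewrite (leq_ltn_trans (size_sum _ _ _)) // ltnS; apply/bigmax_leqP => i _.
rewrite (leq_trans (size_scale_leq _ _)) // size_polyXn ltn_exp2l //.
Qed.

Lemma card_linearized_roots (F : finIdomainType) (Q m : nat) (c : nat -> F) :
  (1 < Q)%N -> c m != 0 ->
  (#|[set x | (\sum_(i < m.+1) c i * x ^+ (Q ^ i) == 0)%R]| <= Q ^ m)%N.
Proof.
move=> Q_gt1 cm_neq0; pose p := \sum_(i < m.+1) c i *: 'X^(Q ^ i).
have p_neq0 : p != 0 by rewrite -size_poly_gt0 size_linearized.
rewrite -ltnS -(size_linearized Q_gt1 cm_neq0) -/p.
apply: leq_trans (card_roots_lt_size p_neq0); apply/subset_leq_card/subsetP => x.
rewrite !inE /root /p horner_sum.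
by under [in X in _ -> X]eq_bigr do rewrite hornerZ hornerXn.
Qed.

Section PermutationPolynomial.
Variables (F : finFieldType) (q k : nat).
Hypotheses (q_gt1 : (1 < q)%N) (exprqD : forall x y : F, (x + y) ^+ q = x ^+ q + y ^+ q).
Hypothesis cardF : #|F| = (q ^ (4 * k))%N.

Let q_gt0 : (0 < q)%N. Proof. exact: ltnW. Qed.
Let q2_gt0 : (0 < q ^ 2)%N. Proof. by rewrite expn_gt0 q_gt0. Qed.
Let exprq2D := exprQnD exprqD 2.
Let exprqN := exprQN q_gt0 exprqD.
Let exprqMn := exprQMn q_gt0 exprqD.

Local Notation Tr2 := (trq (q ^ 2) (2 * k)).
Local Notation Tr := (trq q (4 * k)).

Lemma exprq4k (x : F) : x ^+ (q ^ (4 * k)) = x.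
Proof. by rewrite -cardF expf_card. Qed.

Lemma Tr2_exprq2 (x : F) : Tr2 x ^+ (q ^ 2) = Tr2 x.
Proof. by apply: (trq_exprQ_id q2_gt0 exprq2D) => y; rewrite -expnM mulnA exprq4k. Qed.

Lemma Tr2_exprq (x : F) : Tr2 x ^+ q = Tr x - Tr2 x.
Proof.
by rewrite -[(4 * k)%N]/(2 * 2 * k)%N -mulnA (trq_tower q_gt0 exprqD) addrC addKr.
Qed.

Lemma Tr_exprqB_add (x delta : F) : Tr (x ^+ q - x + delta) = Tr delta.
Proof. by rewrite trqD // (trq_exprQB q_gt0 exprqD exprq4k) add0r. Qed.

Lemma gpoly_exprq2 (z : F) : gpoly q k z ^+ (q ^ 2) = gpoly q k z.
Proof.
pose G j := z ^+ (q ^ (2 * j) + q ^ (2 * j + 2 * k)).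
have G_exprq2 j : G j ^+ (q ^ 2) = G j.+1.
  by rewrite /G -exprM mulnDl -!expnD addnAC -!mulnSr.
rewrite /gpoly exprQn_sum //; under eq_bigr => j _ do rewrite G_exprq2.
apply: (@sum_shift_periodic _ G); rewrite /G -mulnDl exprD exprq4k.
by rewrite muln0 add0n expn0 add1n exprS mulrC.
Qed.

Lemma gpolyD_fixed (y w : F) : w ^+ (q ^ 2) = w ->
  gpoly q k (y + w) = gpoly q k y + w * Tr2 y + w ^+ 2 *+ k.
Proof.
move=> w_fixed; have w_fixedn i : w ^+ ((q ^ 2) ^ i) = w.
  by elim: i => [|i IHi]; rewrite ?expr1 // expnSr exprM IHi w_fixed.
have gpolyE z : gpoly q k z =
    \sum_(j < k) z ^+ ((q ^ 2) ^ j) * z ^+ ((q ^ 2) ^ (k + j)).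
  by apply: eq_bigr => j _; rewrite exprD -!expnM mulnDr addnC.
rewrite -[k in _ *+ k]card_ord -sumr_const !gpolyE /trq mul2n -addnn big_split_ord.
rewrite mulrDr !mulr_sumr -!big_split; apply: eq_bigr => j _ /=.
by rewrite !(exprQnD exprq2D) !w_fixedn; ring.
Qed.

Lemma exprq_frobB (u : F) : u ^+ (q ^ 2) = u -> (u ^+ q - u) ^+ q = - (u ^+ q - u).
Proof. by move=> u_fixed; rewrite exprqD exprqN -exprM mulnn u_fixed opprB. Qed.

Hypothesis k_gt0 : (0 < k)%N.

Lemma Tr2_exprqB_linearized (x : F) :
  Tr2 x ^+ q - Tr2 x = \sum_(i < (4 * k).-1.+1) (-1) ^+ i.+1 * x ^+ (q ^ i).
Proof.
rewrite prednK ?muln_gt0 // -[(4 * k)%N]/(2 * 2 * k)%N -mulnA.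
rewrite (sum_ord_pairs (fun i => (-1) ^+ i.+1 * x ^+ (q ^ i))).
rewrite (exprQ_trq q_gt0 exprqD (q ^ 2) (2 * k) x) /trq -sumrB; apply: eq_bigr => j _.
by rewrite !exprS exprM sqrrN !expr1n -exprM -!expnM -expnS; ring.
Qed.

Lemma card_Tr2_exprq_fixed :
  (#|[set x : F | (Tr2 x ^+ q - Tr2 x == 0)%R]| <= q ^ (4 * k).-1)%N.
Proof.
have -> : [set x : F | Tr2 x ^+ q - Tr2 x == 0]
    = [set x | \sum_(i < (4 * k).-1.+1) (-1) ^+ i.+1 * x ^+ (q ^ i) == 0].
  by apply/setP => x; rewrite !inE Tr2_exprqB_linearized.
by apply: (@card_linearized_roots _ _ _ (fun i => (-1) ^+ i.+1)); rewrite ?signr_eq0.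
Qed.

Lemma exists_Tr2_exprq_neq : exists x : F, Tr2 x ^+ q != Tr2 x.
Proof.
have /subsetPn[x _] : ~~ ([set: F] \subset [set x : F | Tr2 x ^+ q - Tr2 x == 0]).
  apply: contraTN card_Tr2_exprq_fixed => /subset_leq_card; rewrite cardsT cardF => le.
  by rewrite -ltnNge (leq_trans _ le) // ltn_exp2l // ltn_predL muln_gt0 k_gt0.
by rewrite inE subr_eq0; exists x.
Qed.

Lemma Tr2_exprqB_onto (s : F) : s + s ^+ q = 0 -> exists x, s = Tr2 x ^+ q - Tr2 x.
Proof.
pose M (x : F) := Tr2 x ^+ q - Tr2 x.
pose Z := [set s : F | \sum_(i < 1.+1) 1 * s ^+ (q ^ i) == 0].
have ZE s' : (s' \in Z) = (s' + s' ^+ q == 0).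
  by rewrite inE !big_ord_recr big_ord0 /= expn0 expn1 expr1 !mul1r add0r.
have MB x y : M (x - y) = M x - M y.
  by rewrite /M (trqB q2_gt0 exprq2D) exprqD exprqN; ring.
have card_imM : (q <= #|M @: F|)%N.
  have := card_le_image_mul_kernel MB; rewrite cardF => le.
  rewrite -(@leq_pmul2r (q ^ (4 * k).-1)) ?expn_gt0 ?q_gt0 // -expnS prednK ?muln_gt0 //.
  exact: leq_trans le (leq_mul (leqnn _) card_Tr2_exprq_fixed).
have imM_sub : M @: F \subset Z.
  apply/subsetP => _ /imsetP[x _ ->]; rewrite ZE /M exprqD exprqN -exprM mulnn Tr2_exprq2.
  by rewrite addrA subrK subrr.
have cardZ : (#|Z| <= q)%N.
  by have := @card_linearized_roots F q 1 (fun=> 1) q_gt1 (oner_neq0 _); rewrite expn1.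
have /eqP imME : M @: F == Z by rewrite eqEcard imM_sub (leq_trans cardZ card_imM).
move=> s_in; have /imsetP[x _ ->] : s \in M @: F by rewrite imME ZE s_in.
by exists x.
Qed.

Lemma exists_Tr2_value (delta r : F) :
  r + r ^+ q = Tr delta -> exists x, Tr2 (x ^+ q - x + delta) = r.
Proof.
move=> rE; have [|x sE] := @Tr2_exprqB_onto (r - Tr2 delta).
  by rewrite exprqD exprqN Tr2_exprq -rE; ring.
exists x; rewrite (trqD exprq2D) (trqB q2_gt0 exprq2D).
by rewrite -(exprQ_trq q_gt0 exprqD (q ^ 2) (2 * k) x) -sE; ring.
Qed.

Variables (delta a : F).
Hypotheses (aq : a ^+ q = a) (a_neq0 : a != 0).

Local Notation fpoly := (fun x => gpoly q k (x ^+ q - x + delta) + a * x).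

Definition increment (y u : F) : F :=
  (u ^+ q - u) * Tr2 y + (u ^+ q - u) ^+ 2 *+ k + a * u.

Lemma fpoly_shift (x u : F) : u ^+ (q ^ 2) = u ->
  fpoly (x + u) = fpoly x + increment (x ^+ q - x + delta) u.
Proof.
move=> u_fixed; have w_fixed : (u ^+ q - u) ^+ (q ^ 2) = u ^+ q - u.
  by rewrite -mulnn exprM !exprq_frobB // exprqN exprq_frobB ?opprK.
have -> : (x + u) ^+ q - (x + u) + delta = (x ^+ q - x + delta) + (u ^+ q - u).
  by rewrite exprqD; ring.
by rewrite gpolyD_fixed // /increment; ring.
Qed.

Lemma increment_subexprq (y u : F) : u ^+ (q ^ 2) = u ->
  increment y u - increment y u ^+ q = (u ^+ q - u) * (Tr y - a).
Proof.
move=> u_fixed; rewrite /increment !exprqD !exprMn exprqMn exprAC.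
rewrite exprq_frobB // aq Tr2_exprq; ring.
Qed.

Lemma fpoly_inj : Tr delta != a -> injective fpoly.
Proof.
move=> Tr_neq x1 x2 f12; set u := x2 - x1; set y := x1 ^+ q - x1 + delta.
have u_fixed : u ^+ (q ^ 2) = u.
  have a_fixed : a ^+ (q ^ 2) = a by rewrite -mulnn exprM !aq.
  have au : a * u = gpoly q k y - gpoly q k (x2 ^+ q - x2 + delta).
    by rewrite -[gpoly q k y](addrK (a * x1)) [_ + a * x1]f12 /u; ring.
  apply: (mulfI a_neq0); rewrite -{1}a_fixed -exprMn au (exprQnB q_gt0 exprqD).
  by rewrite !gpoly_exprq2.
have incr0 : increment y u = 0.
  by apply: (addrI (fpoly x1)); rewrite addr0 -fpoly_shift // [x1 + u]addrC subrK.
have w0 : u ^+ q - u = 0.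
  apply/eqP; have := increment_subexprq y u_fixed.
  rewrite incr0 expr0n gtn_eqF // subr0 Tr_exprqB_add => /esym/eqP.
  by rewrite mulf_eq0 [_ - a == 0]subr_eq0 (negbTE Tr_neq) orbF.
move: incr0; rewrite /increment w0 expr0n !mul0r mul0rn !add0r => /eqP.
by rewrite mulf_eq0 (negbTE a_neq0) subr_eq0 => /eqP.
Qed.

Lemma fpoly_not_inj : Tr delta = a -> ~ injective fpoly.
Proof.
move=> Tr_eq fpoly_inj; have [x0] := exists_Tr2_exprq_neq; set u := Tr2 x0 => uq_neq.
have u_fixed : u ^+ (q ^ 2) = u by apply: Tr2_exprq2.
set w := u ^+ q - u; have w_neq0 : w != 0 by rewrite subr_eq0.
have uq : u ^+ q = u + w by rewrite addrC subrK.
pose r := - (w ^+ 2 *+ k + a * u) / w.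
have [|x Tr2_value] := @exists_Tr2_value delta r.
  rewrite Tr_eq /r exprMn exprVn exprqN exprqD exprMn exprqMn aq exprAC exprq_frobB //.
  by rewrite -/w uq sqrrN; field; rewrite oppr_eq0 w_neq0.
have incr0 : increment (x ^+ q - x + delta) u = 0.
  by rewrite /increment -/w Tr2_value /r; field.
have /addrI u0 : x + u = x + 0.
  by rewrite addr0; apply: fpoly_inj; rewrite fpoly_shift // incr0 addr0.
by move: w_neq0; rewrite /w u0 expr0n gtn_eqF // subrr eqxx.
Qed.

End PermutationPolynomial.

Theorem mainTheorem8 (F : finFieldType) (q k : nat)
  (hq : exists p m : nat, [/\ prime p, (0 < m)%N & q = (p ^ m)%N])
  (hk : (1 <= k)%N) (hF : #|F| = (q ^ (4 * k))%N)
  (delta a : F) (haq : a ^+ q = a) (ha0 : a != 0) :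
  bijective (fun x : F => gpoly q k (x ^+ q - x + delta) + a * x)
  <-> trq q (4 * k) delta != a.
Proof.
case: hq => p [m [p_prime m_gt0 qE]].
have q_gt1 : (1 < q)%N by rewrite qE -(expn0 p) ltn_exp2l ?prime_gt1.
have p_char : p \in [pchar F] by apply: card_finPcharP p_prime; rewrite hF qE -expnM.
have exprqD (x y : F) : (x + y) ^+ q = x ^+ q + y ^+ q.
  by apply: exprDn_pchar; rewrite qE pnatX pnatE // p_char.
split=> [/bij_inj f_inj | Tr_neq].
  by apply/negP => /eqP Tr_eq; apply: fpoly_not_inj Tr_eq f_inj.
by apply: injF_bij; apply: fpoly_inj.
Qed.
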